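(* Let $\Omega = \mathbb{R}^{2n}$, or $\Omega = \mathbb{Z}_d^{2n}$ with $d$ prime. Let $\{(V,\vec v_j)\}_j$ be a family of epistemic states, with $V = \langle \vec f_1,\dots,\vec f_k\rangle$, such that $\vec f_k$ is totally unknown in the family and $\vec f_1,\dots,\vec f_{k-1}$ are constant. Then there exists an observable $\vec f\in\Omega$ such that $V' := \langle \vec f_1,\dots,\vec f_{k-1}\rangle \oplus \langle\vec f\rangle$ is an isotropic subspace with $V'\neq V$. Furthermore, $(V',\vec v_j)$ is a valid epistemic state for every valuation vector $\vec v_j$ of the family.
   Context: Phase space $\Omega$ (over $\mathbb R$ or $\mathbb Z_d$) with coordinates $(q_1,p_1,\dots,q_n,p_n)$. Observables are vectors $\vec f\in\Omega$, evaluated on an ontic state $\vec m$ as $\vec f^T\vec m$. Symplectic form: $\langle\vec f,\vec g\rangle = \sum_{i=1}^n (f_{2i-1}g_{2i} - f_{2i}g_{2i-1})$ (mod $d$ in the discrete case); observables commute if this vanishes. A subspace $V$ is isotropic if $\langle \vec f,\vec g\rangle=0$ for all $\vec f,\vec g\in V$. A (valid) epistemic state is a pair $(V,\vec v)$ with $V\subseteq\Omega$ isotropic and $\vec v\in\Omega$. For a family $\{(V,\vec v_j)\}_j$, an observable $\vec f_i\in V$ is constant if $\vec f_i^T\vec v_j$ is the same for all $j$, and totally unknown if for every possible value $c$ of $\vec f_i$ (every value attained by $\vec f_i^T\vec m$, $\vec m\in\Omega$) some member satisfies $\vec f_i^T\vec v_j = c$. *)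

From HB Require Import structures.
From mathcomp Require Import all_boot all_order all_algebra.
From mathcomp Require Import reals.
Set Implicit Arguments. Unset Strict Implicit. Unset Printing Implicit Defensive.
Import Order.TTheory GRing.Theory Num.Theory.
Local Open Scope ring_scope.

(* Phase space Omega = F^(2n), vectors are row vectors 'rV[F]_(n.*2),
   with 0-based coordinates (q_1,p_1,...,q_n,p_n) = (x 0, x 1, ..., x (2n-2), x (2n-1)). *)
Definition Omega (F : fieldType) (n : nat) := 'rV[F]_(n.*2).

Definition obs_val (F : fieldType) (m : nat) (f x : 'rV[F]_m) : F :=
  \sum_(i < m) f 0 i * x 0 i.

(* Symplectic form <f,g> = sum_{i=1}^n (f_{2i-1} g_{2i} - f_{2i} g_{2i-1})
   (1-based); in 0-based indices: sum over even i with j = i+1 of f_i g_j - f_j g_i. *)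
Definition sympl (F : fieldType) (m : nat) (f g : 'rV[F]_m) : F :=
  \sum_(i < m | ~~ odd i) \sum_(j < m | val j == (val i).+1)
     (f 0 i * g 0 j - f 0 j * g 0 i).

Definition isotropic (F : fieldType) (m r : nat) (S : 'M[F]_(r, m)) : Prop :=
  forall x y : 'rV[F]_m, (x <= S)%MS -> (y <= S)%MS -> sympl x y = 0.

(* (V, v) is a valid epistemic state: V isotropic, v any vector of Omega. *)
Definition valid_epistemic (F : fieldType) (m r : nat) (S : 'M[F]_(r, m))
  (v : 'rV[F]_m) : Prop := isotropic S.

Definition constant_in (F : fieldType) (m : nat) (J : Type) (v : J -> 'rV[F]_m)
  (f : 'rV[F]_m) : Prop :=
  forall j j' : J, obs_val f (v j) = obs_val f (v j').

Definition totally_unknown (F : fieldType) (m : nat) (J : Type) (v : J -> 'rV[F]_m)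
  (f : 'rV[F]_m) : Prop :=
  forall c : F, (exists x : 'rV[F]_m, obs_val f x = c) -> exists j : J, obs_val f (v j) = c.

(* The claim of the theorem over the field F, for Omega = F^(2n).
   The generators f_1..f_k of V are f 0, ..., f (k-1), f k (0-based; f ord_max = f_k),
   assumed to form a basis of V. *)
Definition claim (F : fieldType) (n : nat) : Prop :=
  forall (k : nat) (J : Type) (f : 'I_k.+1 -> 'rV[F]_(n.*2)) (v : J -> 'rV[F]_(n.*2)),
    let V := \matrix_(i < k.+1) f i in
    let W := \matrix_(i < k) f (widen_ord (leqnSn k) i) in
    row_free V ->
    (forall j, valid_epistemic V (v j)) ->
    totally_unknown v (f ord_max) ->
    (forall i : 'I_k.+1, i != ord_max -> constant_in v (f i)) ->
    exists g : 'rV[F]_(n.*2),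
      let V' := (W + g)%MS in
      [/\ ~~ (g <= W)%MS, mxdirect (W + g), isotropic V', ~~ (V' == V)%MS
        & forall j, valid_epistemic V' (v j)].

From HB Require Import structures.
From mathcomp Require Import all_boot all_order all_algebra.
From mathcomp Require Import reals.
From mathcomp Require Import zify ring.
Set Implicit Arguments. Unset Strict Implicit. Unset Printing Implicit Defensive.
Import Order.TTheory GRing.Theory Num.Theory.
Local Open Scope ring_scope.

(* Only the isotropy of V matters (the family is nonempty since f_k is totally
   unknown). The symplectic form is nondegenerate, so the symplectic complement
   of W = <f_1, ..., f_(k-1)> has dimension 2n - dim W, while an isotropic V has
   dim V <= n. Hence 2n - dim W > dim V, and some g orthogonal to W lies outside
   V; W + g is isotropic because the form is alternating. Nothing here uses
   the field being R or Z_d. *)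

Section SymplecticForm.
Variables (F : fieldType) (n : nat).
Local Notation m := n.*2.

Definition sympl_pairing (i j : 'I_m) : F := ((~~ odd i) && (val j == (val i).+1))%:R.

Definition sympl_mx : 'M[F]_m :=
  \matrix_(i, j) (sympl_pairing i j - sympl_pairing j i).

Lemma symplE (x y : 'rV[F]_m) : sympl x y = (x *m sympl_mx *m y^T) 0 0.
Proof.
have -> : (x *m sympl_mx *m y^T) 0 0 =
    \sum_i \sum_j x 0 i * (sympl_pairing i j - sympl_pairing j i) * y 0 j.
  rewrite mxE exchange_big /=; apply: eq_bigr => j _.
  by rewrite !mxE big_distrl /=; apply: eq_bigr => i _; rewrite !mxE.
transitivity (\sum_i \sum_j sympl_pairing i j * (x 0 i * y 0 j - x 0 j * y 0 i)).
  rewrite /sympl big_mkcond; apply: eq_bigr => i _ /=.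
  case: ifP => even_i; last by rewrite big1 // => j _; rewrite /sympl_pairing even_i mul0r.
  rewrite big_mkcond; apply: eq_bigr => j _ /=; rewrite /sympl_pairing even_i /=.
  by case: eqP; rewrite ?mul1r ?mul0r.
rewrite (eq_bigr (fun i => \sum_j sympl_pairing i j * (x 0 i * y 0 j)
                          - \sum_j sympl_pairing i j * (x 0 j * y 0 i))); last first.
  by move=> i _; rewrite -sumrB; apply: eq_bigr => j _; rewrite mulrBr.
rewrite sumrB [X in _ - X]exchange_big /= -sumrB.
by apply: eq_bigr => i _; rewrite -sumrB; apply: eq_bigr => j _; ring.
Qed.

Lemma sympl_mx_tr : sympl_mx^T = - sympl_mx.
Proof. by apply/matrixP => i j; rewrite !mxE opprB. Qed.

Lemma sympl_self (x : 'rV[F]_m) : sympl x x = 0.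
Proof.
by rewrite /sympl big1 // => i _; rewrite big1 // => j _; rewrite mulrC subrr.
Qed.

Definition sympl_partner_nat (i : nat) := if odd i then i.-1 else i.+1.

Lemma sympl_partner_lt (i : 'I_m) : (sympl_partner_nat i < m)%N.
Proof.
rewrite /sympl_partner_nat; case: ifP => odd_i.
  exact: leq_ltn_trans (leq_pred i) (ltn_ord i).
rewrite ltn_neqAle ltn_ord andbT; apply/eqP => m_eq.
by have := congr1 odd m_eq; rewrite odd_double /= odd_i.
Qed.

Definition sympl_partner (i : 'I_m) : 'I_m := Ordinal (sympl_partner_lt i).

Lemma sympl_partnerK : involutive sympl_partner.
Proof.
move=> [[|i] lt_i]; apply: val_inj => //=; rewrite /sympl_partner_nat /=.
by case: (boolP (odd i)) => odd_i /=; rewrite ?odd_i ?(negbTE odd_i).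
Qed.

Lemma sympl_mxE i j :
  sympl_mx i j = (if odd i then -1 else 1) * (j == sympl_partner i)%:R.
Proof.
rewrite mxE /sympl_pairing -val_eqE /= /sympl_partner_nat.
case: i => [[|i] lt_i] /=; first by rewrite andbF subr0 mul1r.
rewrite eqSS; case: ifP => odd_i /=; case: (eqVneq (val j) i) => [->|ne_ji];
  by rewrite ?odd_i ?andbF ?sub0r ?subr0 ?subrr ?mulN1r ?mul1r ?mulr0.
Qed.

Lemma sympl_mx_unit : sympl_mx \in unitmx.
Proof.
suff /mulmx1_unit[] : sympl_mx *m sympl_mx^T = 1%:M by [].
apply/matrixP => i k; rewrite !mxE (bigD1 (sympl_partner i)) //= big1 ?addr0.
  rewrite [sympl_mx^T _ _]mxE !sympl_mxE eqxx mulr1.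
  rewrite (inj_eq (can_inj sympl_partnerK)) eq_sym.
  case: (eqVneq i k) => [->|_]; last by rewrite !mulr0.
  by case: ifP; rewrite ?mulN1r ?opprK ?mul1r.
by move=> j /negbTE ne_j; rewrite sympl_mxE ne_j mulr0 mul0r.
Qed.

Lemma sympl_gramE r1 r2 (A : 'M[F]_(r1, m)) (C : 'M[F]_(r2, m)) a b :
  (A *m sympl_mx *m C^T) a b = sympl (row a A) (row b C).
Proof.
rewrite symplE !mxE; apply: eq_bigr => j _; rewrite !mxE; congr (_ * _).
by apply: eq_bigr => l _; rewrite !mxE.
Qed.

Lemma sympl_gram_tr r1 r2 (A : 'M[F]_(r1, m)) (C : 'M[F]_(r2, m)) :
  (A *m sympl_mx *m C^T)^T = - (C *m sympl_mx *m A^T).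
Proof. by rewrite !trmx_mul trmxK sympl_mx_tr mulNmx mulmxN mulmxA. Qed.

Lemma isotropicP r (S : 'M[F]_(r, m)) :
  reflect (isotropic S) (S *m sympl_mx *m S^T == 0).
Proof.
apply: (iffP eqP) => [gram0 x y /submxP[u ->] /submxP[w ->] | iso].
  rewrite symplE trmx_mul.
  have -> : u *m S *m sympl_mx *m (S^T *m w^T) = u *m (S *m sympl_mx *m S^T) *m w^T.
    by rewrite !mulmxA.
  by rewrite gram0 mulmx0 mul0mx mxE.
by apply/matrixP => a b; rewrite sympl_gramE mxE; apply: iso; apply: row_sub.
Qed.

Lemma isotropicS r1 r2 (T : 'M[F]_(r1, m)) (S : 'M[F]_(r2, m)) :
  (T <= S)%MS -> isotropic S -> isotropic T.
Proof. by move=> sTS isoS x y xT yT; apply: isoS; apply: submx_trans sTS. Qed.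

Definition sympl_orth r (W : 'M[F]_(r, m)) := kermx (sympl_mx *m W^T).

Lemma sympl_orthP p r (X : 'M[F]_(p, m)) (W : 'M[F]_(r, m)) :
  reflect (X *m sympl_mx *m W^T = 0) (X <= sympl_orth W)%MS.
Proof. by rewrite -mulmxA; apply: sub_kermxP. Qed.

Lemma mxrank_sympl_orth r (W : 'M[F]_(r, m)) :
  \rank (sympl_orth W) = (m - \rank W)%N.
Proof.
rewrite mxrank_ker; congr (_ - _)%N.
by rewrite eqmxMfull ?mxrank_tr // row_full_unit sympl_mx_unit.
Qed.

Lemma isotropic_mxrank r (S : 'M[F]_(r, m)) :
  isotropic S -> ((\rank S).*2 <= m)%N.
Proof.
move=> /isotropicP/eqP isoS.
have /mxrankS : (S <= sympl_orth S)%MS by apply/sympl_orthP.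
by rewrite mxrank_sympl_orth; lia.
Qed.

Lemma isotropic_adds_orth r (W : 'M[F]_(r, m)) (g : 'rV[F]_m) :
  isotropic W -> (g <= sympl_orth W)%MS -> isotropic (W + g)%MS.
Proof.
move=> /isotropicP/eqP isoW /sympl_orthP orth_g.
suff iso : isotropic (col_mx W g) by move=> x y; rewrite !addsmxE; apply: iso.
apply/isotropicP.
have orth_W : W *m sympl_mx *m g^T = 0.
  by apply: trmx_inj; rewrite sympl_gram_tr orth_g oppr0 trmx0.
have isog : g *m sympl_mx *m g^T = 0.
  by apply/matrixP => a b; rewrite !ord1 -symplE sympl_self mxE.
rewrite tr_col_mx mul_col_mx mul_col_row isoW orth_W orth_g isog.
by rewrite block_mx0.
Qed.

Lemma isotropic_extension r1 r2 (W : 'M[F]_(r1, m)) (V : 'M[F]_(r2, m)) :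
  isotropic V -> (W <= V)%MS -> (\rank W < \rank V)%N ->
  exists2 g : 'rV[F]_m, ~~ (g <= V)%MS & isotropic (W + g)%MS.
Proof.
move=> isoV sWV ltWV.
have ltVorth : (\rank V < \rank (sympl_orth W))%N.
  by rewrite mxrank_sympl_orth; have := isotropic_mxrank isoV; lia.
have /existsP[i orth_i] : [exists i, ~~ (row i (sympl_orth W) <= V)%MS].
  rewrite -negb_forall; apply: contraL ltVorth => /forallP rows_in_V.
  by rewrite -leqNgt; apply/mxrankS/row_subP.
exists (row i (sympl_orth W)) => //.
by apply: isotropic_adds_orth (isotropicS sWV isoV) (row_sub _ _).
Qed.

End SymplecticForm.

Lemma mxdirect_adds_row (F : fieldType) r m (W : 'M[F]_(r, m)) (g : 'rV[F]_m) :
  ~~ (g <= W)%MS -> mxdirect (W + g).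
Proof.
move=> gW; apply/mxdirect_addsP/eqP; rewrite -mxrank_eq0 -leqn0.
apply: contraR gW; rewrite -ltnNge => cap_pos.
have g_le_cap : (g <= W :&: g)%MS.
  rewrite -(geq_leqif (mxrank_leqif_sup (capmxSr W g))).
  exact: leq_trans (rank_leq_row g) cap_pos.
exact: submx_trans g_le_cap (capmxSl W g).
Qed.

Lemma claim_field (F : fieldType) (n : nat) : claim F n.
Proof.
move=> k J f v V W freeV validV unknown_fk _.
have [j0 _] : exists j, obs_val (f ord_max) (v j) = obs_val (f ord_max) 0.
  by apply: unknown_fk; exists 0.
have isoV : isotropic V := validV j0.
have sWV : (W <= V)%MS by apply/row_subP => a; rewrite rowK -(rowK f) row_sub.
have ltWV : (\rank W < \rank V)%N.
  by rewrite (eqP freeV); apply: leq_ltn_trans (rank_leq_row W) _.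
have [g gV isoWg] := isotropic_extension isoV sWV ltWV.
have gW : ~~ (g <= W)%MS by apply: contra gV => /submx_trans; apply.
exists g; split => //; first exact: mxdirect_adds_row.
by apply: contra gV => /andP[/(submx_trans (addsmxSr W g))].
Qed.

Theorem mainTheorem5 :
  (forall (R : realType) (n : nat), claim R n) /\
  (forall (d : nat), prime d -> forall n : nat, claim 'F_d n).
Proof. by split=> [R n | d _ n]; apply: claim_field. Qed.
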